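(* Let $\mathcal{P}$ be a process LTS and $\mathcal{E}$ an environment LTS over the same action set $A$. (i) $\sim_e\ \subseteq\ \sim^{ji}_e$ for every environment $e$. (ii) If $A$ contains two distinct actions $a,b$ and there are states $x,y$ occurring both as processes and as environments with (up to isomorphism of reachable parts) $y$ having exactly the transitions $y\xrightarrow{a}y_1\xrightarrow{b}y_2$, and $x$ having exactly the transitions $x\xrightarrow{a}x_1\xrightarrow{b}x_2$ and $x\xrightarrow{a}x_3$, where $x_2,x_3,y_2$ have no transitions (i.e. $y=a.b$ and $x=a.b+a$), then there is an environment $e$ with $\sim_e\ \subsetneq\ \sim^{ji}_e$ (namely $e=x$, with $y\sim^{ji}_e x$ but not $y\sim_e x$). (iii) $\sim^{ji}_e\ \subseteq\ \simeq^{ji}_e$ for every environment $e$. (iv) Under the same proviso as in (ii), there is an environment $g$ with $\sim^{ji}_g\ \subsetneq\ \simeq^{ji}_g$ (namely $g=y$, with $y\simeq^{ji}_g x$ but not $y\sim^{ji}_g x$).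
   Context: A labeled transition system (LTS) is a triple $\langle \mathrm{St},A,\to\rangle$ with states, actions, and transitions $s\xrightarrow{a}t$. A process LTS $\mathcal{P}=\langle \mathrm{Pr},A,\to\rangle$ has states called processes; an environment LTS $\mathcal{E}=\langle\mathrm{Env},A,\Rightarrow\rangle$ has states called environments, transitions $e\xRightarrow{a}e'$. A simulation is a nonempty relation $S$ on states such that $s\,S\,t$ and $s\xrightarrow{a}s'$ imply some $t\xrightarrow{a}t'$ with $s'\,S\,t'$; a bisimulation is a relation $B$ such that $B$ and its converse are simulations; $\le$ and $\sim$ denote simulatability and bisimilarity (existence of a simulation, resp. bisimulation, relating the states). An $\mathcal{E}$-parameterized bisimulation is a family $(B_f)_{f\in\mathrm{Env}}$ of nonempty relations on $\mathrm{Pr}$ such that whenever $p\,B_e\,q$ and $e\xRightarrow{a}e'$: every $p\xrightarrow{a}p'$ is matched by some $q\xrightarrow{a}q'$ with $p'\,B_{e'}\,q'$, and every $q\xrightarrow{a}q'$ by some $p\xrightarrow{a}p'$ with $p'\,B_{e'}\,q'$. $p\sim_e q$ iff some such family has $p\,B_e\,q$. The join LTS $\mathcal{P}\mathbin{\&}\mathcal{E}$ has states $p\mathbin{\&}e$ and transitions $p\mathbin{\&}e\xrightarrow{a}p'\mathbin{\&}e'$ iff $p\xrightarrow{a}p'$ and $e\xRightarrow{a}e'$. $p\le^{ji}_e q$ iff $p\mathbin{\&}e\le q\mathbin{\&}e$; $p\sim^{ji}_e q$ iff $p\mathbin{\&}e\sim q\mathbin{\&}e$; $p\simeq^{ji}_e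 q$ iff $p\le^{ji}_e q$ and $q\le^{ji}_e p$. *)

Set Implicit Arguments.

Definition simulation {St A : Type} (tr : St -> A -> St -> Prop)
  (S : St -> St -> Prop) : Prop :=
  (exists s t, S s t) /\
  forall s t a s', S s t -> tr s a s' -> exists t', tr t a t' /\ S s' t'.

Definition bisimulation {St A : Type} (tr : St -> A -> St -> Prop)
  (B : St -> St -> Prop) : Prop :=
  simulation tr B /\ simulation tr (fun s t => B t s).

Definition simulates {St A : Type} (tr : St -> A -> St -> Prop) (s t : St) : Prop :=
  exists S, simulation tr S /\ S s t.

Definition bisimilar {St A : Type} (tr : St -> A -> St -> Prop) (s t : St) : Prop :=
  exists B, bisimulation tr B /\ B s t.

Definition param_bisimulation {Pr Env A : Type}
  (trP : Pr -> A -> Pr -> Prop) (trE : Env -> A -> Env -> Prop)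
  (B : Env -> Pr -> Pr -> Prop) : Prop :=
  (forall f, exists p q, B f p q) /\
  forall e p q a e', B e p q -> trE e a e' ->
    (forall p', trP p a p' -> exists q', trP q a q' /\ B e' p' q') /\
    (forall q', trP q a q' -> exists p', trP p a p' /\ B e' p' q').

Definition param_bisim {Pr Env A : Type}
  (trP : Pr -> A -> Pr -> Prop) (trE : Env -> A -> Env -> Prop)
  (e : Env) (p q : Pr) : Prop :=
  exists B, param_bisimulation trP trE B /\ B e p q.

Definition join_tr {Pr Env A : Type}
  (trP : Pr -> A -> Pr -> Prop) (trE : Env -> A -> Env -> Prop)
  (s : Pr * Env) (a : A) (t : Pr * Env) : Prop :=
  trP (fst s) a (fst t) /\ trE (snd s) a (snd t).

Definition ji_sim {Pr Env A : Type}
  (trP : Pr -> A -> Pr -> Prop) (trE : Env -> A -> Env -> Prop)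
  (e : Env) (p q : Pr) : Prop :=
  simulates (join_tr trP trE) (p, e) (q, e).

Definition ji_bisim {Pr Env A : Type}
  (trP : Pr -> A -> Pr -> Prop) (trE : Env -> A -> Env -> Prop)
  (e : Env) (p q : Pr) : Prop :=
  bisimilar (join_tr trP trE) (p, e) (q, e).

Definition ji_simeq {Pr Env A : Type}
  (trP : Pr -> A -> Pr -> Prop) (trE : Env -> A -> Env -> Prop)
  (e : Env) (p q : Pr) : Prop :=
  ji_sim trP trE e p q /\ ji_sim trP trE e q p.

Definition dead {St A : Type} (tr : St -> A -> St -> Prop) (s : St) : Prop :=
  forall c s', ~ tr s c s'.

Definition is_ab {St A : Type} (tr : St -> A -> St -> Prop) (a b : A) (s : St) : Prop :=
  exists s1 s2,
    (forall c t, tr s c t <-> (c = a /\ t = s1)) /\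
    (forall c t, tr s1 c t <-> (c = b /\ t = s2)) /\
    dead tr s2.

Definition is_ab_plus_a {St A : Type} (tr : St -> A -> St -> Prop) (a b : A) (s : St) : Prop :=
  exists s1 s2 s3,
    (forall c t, tr s c t <-> ((c = a /\ t = s1) \/ (c = a /\ t = s3))) /\
    (forall c t, tr s1 c t <-> (c = b /\ t = s2)) /\
    dead tr s2 /\ dead tr s3.

(** The join semantics lets the environment resolve its own choice together
    with the processes: in [x = a.b + a] as environment, the a-step of the
    process [a.b + a] into its dead branch is matched by [a.b] moving with the
    environment into the environment's dead branch, so [a.b ~^ji_x a.b + a].
    In the parameterized semantics the environment step is chosen first, and
    along its live branch [a.b] must answer that dead branch with a state that
    can still do b.  Similarly, under the environment [a.b] the two processes
    simulate each other, but the joint step to the dead branch of [a.b + a]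
    separates them for bisimilarity. *)

Section UpToDead.
Variables (St A : Type) (tr : St -> A -> St -> Prop).

Lemma simulation_up_to_dead (R D : St -> St -> Prop) :
  (exists s t, R s t) ->
  (forall s t, D s t -> dead tr s) ->
  (forall s t a s', R s t -> tr s a s' ->
     exists t', tr t a t' /\ (R s' t' \/ D s' t')) ->
  simulation tr (fun s t => R s t \/ D s t).
Proof.
  intros [s [t Hst]] HD Hmove; split; [now exists s, t; left|].
  intros s0 t0 a s' [HR|HD0] Hs.
  - exact (Hmove _ _ _ _ HR Hs).
  - now destruct (HD _ _ HD0 _ _ Hs).
Qed.

Lemma simulates_up_to_dead (R : St -> St -> Prop) s t :
  R s t ->
  (forall s t a s', R s t -> tr s a s' ->
     exists t', tr t a t' /\ (R s' t' \/ dead tr s')) ->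
  simulates tr s t.
Proof.
  intros Hst Hmove; exists (fun s t => R s t \/ dead tr s); split; [|now left].
  apply simulation_up_to_dead; eauto.
Qed.

Lemma bisimilar_up_to_dead (R : St -> St -> Prop) s t :
  R s t ->
  (forall s t a s', R s t -> tr s a s' ->
     exists t', tr t a t' /\ (R s' t' \/ (dead tr s' /\ dead tr t'))) ->
  (forall s t a t', R s t -> tr t a t' ->
     exists s', tr s a s' /\ (R s' t' \/ (dead tr s' /\ dead tr t'))) ->
  bisimilar tr s t.
Proof.
  intros Hst Hfwd Hbwd.
  exists (fun s t => R s t \/ (dead tr s /\ dead tr t)); split; [split|now left].
  - apply simulation_up_to_dead; [eauto|now intros ? ? []|exact Hfwd].
  - apply simulation_up_to_dead with (R := fun s t => R t s)
      (D := fun s t => dead tr t /\ dead tr s); [eauto|now intros ? ? []|].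
    intros s0 t0 a s' HR Hs; destruct (Hbwd _ _ _ _ HR Hs) as [t' [Ht [HR'|[]]]];
        eauto.
Qed.

Lemma bisimilar_simulates s t :
  bisimilar tr s t -> simulates tr s t /\ simulates tr t s.
Proof. intros [B [[HB HBc] Hst]]; split; [exists B|exists (fun s t => B t s)]; auto. Qed.

End UpToDead.

Section Join.
Variables (A Pr Env : Type) (trP : Pr -> A -> Pr -> Prop) (trE : Env -> A -> Env -> Prop).
Notation J := (join_tr trP trE).

Lemma join_dead_l p e : dead trP p -> dead J (p, e).
Proof. intros Hp c [p' e'] [Hs _]; exact (Hp _ _ Hs). Qed.

Lemma join_dead_r p e : dead trE e -> dead J (p, e).
Proof. intros He c [p' e'] [_ Hs]; exact (He _ _ Hs). Qed.

Lemma param_bisim_ji_bisim e p q :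
  param_bisim trP trE e p q -> ji_bisim trP trE e p q.
Proof.
  intros [B [[_ HB] Hpq]].
  apply bisimilar_up_to_dead
    with (R := fun s t => snd s = snd t /\ B (snd s) (fst s) (fst t)); [now split| |].
  - intros [p0 e0] [q0 e1] c [p' e'] [He01 HB0] [Hp He]; cbn in *; subst e1.
    destruct (proj1 (HB _ _ _ _ _ HB0 He) _ Hp) as [q' [Hq HB']].
    exists (q', e'); repeat split; auto.
  - intros [p0 e0] [q0 e1] c [q' e'] [He01 HB0] [Hq He]; cbn in *; subst e1.
    destruct (proj2 (HB _ _ _ _ _ HB0 He) _ Hq) as [p' [Hp HB']].
    exists (p', e'); repeat split; auto.
Qed.

Lemma ji_bisim_simeq e p q : ji_bisim trP trE e p q -> ji_simeq trP trE e p q.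
Proof. apply bisimilar_simulates. Qed.

Section Counterexamples.
Variables (a b : A).
Variables (y0 y1 y2 x0 x1 x2 x3 : Pr) (f0 f1 f2 g0 g1 g2 g3 : Env).
Hypotheses (Hy0 : forall c p, trP y0 c p <-> c = a /\ p = y1)
  (Hy1 : forall c p, trP y1 c p <-> c = b /\ p = y2) (Hy2 : dead trP y2).
Hypotheses (Hx0 : forall c p, trP x0 c p <-> (c = a /\ p = x1) \/ (c = a /\ p = x3))
  (Hx1 : forall c p, trP x1 c p <-> c = b /\ p = x2)
  (Hx2 : dead trP x2) (Hx3 : dead trP x3).
Hypotheses (Hf0 : forall c e, trE f0 c e <-> c = a /\ e = f1)
  (Hf1 : forall c e, trE f1 c e <-> c = b /\ e = f2).
Hypotheses (Hg0 : forall c e, trE g0 c e <-> (c = a /\ e = g1) \/ (c = a /\ e = g3))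
  (Hg1 : forall c e, trE g1 c e <-> c = b /\ e = g2) (Hg3 : dead trE g3).

Lemma ji_bisim_ab_ab_plus_a : ji_bisim trP trE g0 y0 x0.
Proof.
  apply bisimilar_up_to_dead
    with (R := fun s t => (s = (y0, g0) /\ t = (x0, g0)) \/ (s = (y1, g1) /\ t = (x1, g1)));
    [now left| |].
  - intros s t c [p' e'] [[-> ->]|[-> ->]] [Hp He]; cbn in *.
    + apply Hy0 in Hp as [-> ->]; apply Hg0 in He as [[_ ->]|[_ ->]].
      * exists (x1, g1); split; [split; [apply Hx0|apply Hg0]|]; auto.
      * exists (x1, g3); split; [split; [apply Hx0|apply Hg0]; auto|].
        right; split; apply join_dead_r; auto.
    + apply Hy1 in Hp as [-> ->]; apply Hg1 in He as [_ ->].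
      exists (x2, g2); split; [split; [apply Hx1|apply Hg1]; auto|].
      right; split; apply join_dead_l; auto.
  - intros s t c [p' e'] [[-> ->]|[-> ->]] [Hp He]; cbn in *.
    + apply Hx0 in Hp as [[-> ->]|[-> ->]]; apply Hg0 in He as [[_ ->]|[_ ->]].
      * exists (y1, g1); split; [split; [apply Hy0|apply Hg0]|]; auto.
      * exists (y1, g3); split; [split; [apply Hy0|apply Hg0]; auto|].
        right; split; apply join_dead_r; auto.
      * exists (y1, g3); split; [split; [apply Hy0|apply Hg0]; auto|].
        right; split; [apply join_dead_r|apply join_dead_l]; auto.
      * exists (y1, g3); split; [split; [apply Hy0|apply Hg0]; auto|].
        right; split; apply join_dead_r; auto.
    + apply Hx1 in Hp as [-> ->]; apply Hg1 in He as [_ ->].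
      exists (y2, g2); split; [split; [apply Hy1|apply Hg1]; auto|].
      right; split; apply join_dead_l; auto.
Qed.

Lemma not_param_bisim_ab_ab_plus_a : ~ param_bisim trP trE g0 y0 x0.
Proof.
  intros [B [[_ HB] H0]].
  assert (Hga : trE g0 a g1) by (apply Hg0; auto).
  destruct (proj2 (HB _ _ _ _ _ H0 Hga) x3) as [y' [Hy HB1]]; [apply Hx0; auto|].
  apply Hy0 in Hy as [_ ->].
  assert (Hgb : trE g1 b g2) by (apply Hg1; auto).
  destruct (proj1 (HB _ _ _ _ _ HB1 Hgb) y2) as [x' [Hx _]]; [apply Hy1; auto|].
  exact (Hx3 _ _ Hx).
Qed.

Lemma ji_sim_ab_ab_plus_a : ji_sim trP trE f0 y0 x0.
Proof.
  apply simulates_up_to_dead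
    with (R := fun s t => (s = (y0, f0) /\ t = (x0, f0)) \/ (s = (y1, f1) /\ t = (x1, f1)));
    [now left|].
  intros s t c [p' e'] [[-> ->]|[-> ->]] [Hp He]; cbn in *.
  - apply Hy0 in Hp as [-> ->]; apply Hf0 in He as [_ ->].
    exists (x1, f1); split; [split; [apply Hx0|apply Hf0]|]; auto.
  - apply Hy1 in Hp as [-> ->]; apply Hf1 in He as [_ ->].
    exists (x2, f2); split; [split; [apply Hx1|apply Hf1]; auto|].
    right; apply join_dead_l; auto.
Qed.

Lemma ji_sim_ab_plus_a_ab : ji_sim trP trE f0 x0 y0.
Proof.
  apply simulates_up_to_dead
    with (R := fun s t => (s = (x0, f0) /\ t = (y0, f0)) \/ (s = (x1, f1) /\ t = (y1, f1)));
    [now left|].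
  intros s t c [p' e'] [[-> ->]|[-> ->]] [Hp He]; cbn in *.
  - apply Hf0 in He as [-> ->].
    exists (y1, f1); split; [split; [apply Hy0|apply Hf0]; auto|].
    apply Hx0 in Hp as [[_ ->]|[_ ->]]; [left|right; apply join_dead_l]; auto.
  - apply Hx1 in Hp as [-> ->]; apply Hf1 in He as [_ ->].
    exists (y2, f2); split; [split; [apply Hy1|apply Hf1]; auto|].
    right; apply join_dead_l; auto.
Qed.

Lemma not_ji_bisim_ab_ab_plus_a : ~ ji_bisim trP trE f0 y0 x0.
Proof.
  intros [B [[[_ Hfwd] [_ Hbwd]] H0]].
  destruct (Hbwd (x0, f0) (y0, f0) a (x3, f1) H0) as [[p e] [[Hp He] HB1]];
    [split; [apply Hx0|apply Hf0]; auto|].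
  cbn in *; apply Hy0 in Hp as [_ ->]; apply Hf0 in He as [_ ->].
  destruct (Hfwd (y1, f1) (x3, f1) b (y2, f2) HB1) as [[x' e'] [[Hx _] _]];
    [split; [apply Hy1|apply Hf1]; auto|].
  exact (Hx3 _ _ Hx).
Qed.

End Counterexamples.
End Join.

Theorem proposition3p7 (A Pr Env : Type)
  (trP : Pr -> A -> Pr -> Prop) (trE : Env -> A -> Env -> Prop) :
  (* (i) *)
  (forall (e : Env) (p q : Pr),
     param_bisim trP trE e p q -> ji_bisim trP trE e p q) /\
  (* (ii) *)
  (forall (a b : A) (xP yP : Pr) (xE yE : Env),
     a <> b ->
     is_ab trP a b yP -> is_ab_plus_a trP a b xP ->
     is_ab trE a b yE -> is_ab_plus_a trE a b xE ->
     (forall p q : Pr, param_bisim trP trE xE p q -> ji_bisim trP trE xE p q) /\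
     ji_bisim trP trE xE yP xP /\ ~ param_bisim trP trE xE yP xP) /\
  (* (iii) *)
  (forall (e : Env) (p q : Pr),
     ji_bisim trP trE e p q -> ji_simeq trP trE e p q) /\
  (* (iv) *)
  (forall (a b : A) (xP yP : Pr) (xE yE : Env),
     a <> b ->
     is_ab trP a b yP -> is_ab_plus_a trP a b xP ->
     is_ab trE a b yE -> is_ab_plus_a trE a b xE ->
     (forall p q : Pr, ji_bisim trP trE yE p q -> ji_simeq trP trE yE p q) /\
     ji_simeq trP trE yE yP xP /\ ~ ji_bisim trP trE yE yP xP).
Proof.
  split; [|split; [|split]].
  - apply param_bisim_ji_bisim.
  - intros a b xP yP xE yE _ [y1 [y2 [Hy0 [Hy1 Hy2]]]]
      [x1 [x2 [x3 [Hx0 [Hx1 [Hx2 Hx3]]]]]] _ [g1 [g2 [g3 [Hg0 [Hg1 [_ Hg3]]]]]].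
    split; [apply param_bisim_ji_bisim|split].
    + eapply ji_bisim_ab_ab_plus_a; eauto.
    + eapply not_param_bisim_ab_ab_plus_a; eauto.
  - apply ji_bisim_simeq.
  - intros a b xP yP xE yE _ [y1 [y2 [Hy0 [Hy1 Hy2]]]]
      [x1 [x2 [x3 [Hx0 [Hx1 [Hx2 Hx3]]]]]] [f1 [f2 [Hf0 [Hf1 _]]]] _.
    split; [apply ji_bisim_simeq|split; [split|]].
    + eapply ji_sim_ab_ab_plus_a; eauto.
    + eapply ji_sim_ab_plus_a_ab; eauto.
    + eapply not_ji_bisim_ab_ab_plus_a; eauto.
Qed.
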